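(* Let $G$ be a connected weighted multigraph on the vertex set $V$, $|V|=n\ge2$, with positive edge weights, weighted adjacency matrix $A$ and Perron vector $p$. Let $p'=\sqrt n\,p/\|p\|_2$ and $P'=\operatorname{diag}p'$, and let $G'$ be the weighted graph on $V$ whose weighted adjacency matrix is $P'AP'$. Then for all $i,j\in V$, the long walk distance $d^{LW}(i,j)$ in $G$ equals the resistance distance between $i$ and $j$ in $G'$.
   Context: Loops and multiple edges are allowed; $A=(a_{ij})$ has $a_{ij}$ equal to the sum of weights of the edges joining $i$ and $j$. $\rho$ is the spectral radius of $A$ and the Perron vector $p$ is the positive eigenvector of $A$ for $\rho$ with entries summing to 1. The long walk distance is $d^{LW}(i,j)=\lim_{\alpha\to\infty}\theta\bigl(\tfrac12(\ln r_{ii}+\ln r_{jj})-\ln r_{ij}\bigr)$, where $(r_{ij})=(I-tA)^{-1}$, $t=(\rho+\alpha^{-1})^{-1}$, $\theta=\ln(e+\alpha^{2/n})\frac{\alpha-1}{\ln\alpha}$. For a graph with weighted adjacency matrix $B$, the Laplacian is $L=\operatorname{diag}(B\mathbf 1)-B$ and the resistance distance is $(e_i-e_j)^{\mathsf T}L^{+}(e_i-e_j)$, $L^+$ the Moore–Penrose inverse. *)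

From HB Require Import structures.
From mathcomp Require Import all_boot all_order all_algebra.
From mathcomp Require Import all_classical all_reals all_analysis.
From mathcomp Require Import complex.
Set Implicit Arguments. Unset Strict Implicit. Unset Printing Implicit Defensive.
Import Order.TTheory GRing.Theory Num.Theory.
Local Open Scope ring_scope.
Local Open Scope complex_scope.

Section Defs.
Variable R : realType.

(* A is the weighted adjacency matrix of a weighted multigraph with positive
   edge weights (loops allowed): symmetric with nonnegative entries. *)
Definition weighted_adjacency (n : nat) (A : 'M[R]_n) : Prop :=
  A^T = A /\ (forall i j, 0 <= A i j).

Definition adj_rel (n : nat) (A : 'M[R]_n) : rel 'I_n :=
  fun i j => (i != j) && (0 < A i j).

Definition connected_graph (n : nat) (A : 'M[R]_n) : Prop :=
  forall i j : 'I_n, connect (adj_rel A) i j.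

Definition is_spectral_radius (n : nat) (A : 'M[R]_n) (rho : R) : Prop :=
  (exists z : R[i], root (map_poly (fun x : R => x%:C) (char_poly A)) z
                    /\ `|z| = rho%:C)
  /\ (forall z : R[i], root (map_poly (fun x : R => x%:C) (char_poly A)) z ->
                       `|z| <= rho%:C).

Definition is_perron_vector (n : nat) (A : 'M[R]_n) (rho : R) (p : 'cV[R]_n)
  : Prop :=
  A *m p = rho *: p /\ (forall i, 0 < p i ord0) /\ \sum_i p i ord0 = 1.

Definition resolvent (n : nat) (A : 'M[R]_n) (rho alpha : R) : 'M[R]_n :=
  invmx (1%:M - (rho + alpha^-1)^-1 *: A).

Definition theta (n : nat) (alpha : R) : R :=
  ln (expR 1 + alpha `^ (2 / n%:R)) * ((alpha - 1) / ln alpha).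

(* the expression whose limit as alpha -> +oo is the long walk distance *)
Definition lw_expr (n : nat) (A : 'M[R]_n) (rho : R) (i j : 'I_n) (alpha : R)
  : R :=
  let r := resolvent A rho alpha in
  theta n alpha * (2^-1 * (ln (r i i) + ln (r j j)) - ln (r i j)).

Definition is_moore_penrose (n : nat) (L X : 'M[R]_n) : Prop :=
  [/\ L *m X *m L = L, X *m L *m X = X, (L *m X)^T = L *m X
    & (X *m L)^T = X *m L].

Definition mp_inverse (n : nat) (L : 'M[R]_n) : 'M[R]_n :=
  xget 0 [set X | is_moore_penrose L X].

Definition laplacian (n : nat) (B : 'M[R]_n) : 'M[R]_n :=
  diag_mx (\row_i \sum_j B i j) - B.

Definition resistance_distance (n : nat) (B : 'M[R]_n) (i j : 'I_n) : R :=
  let e := (delta_mx i ord0 - delta_mx j ord0 : 'cV[R]_n) in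
  (e^T *m mp_inverse (laplacian B) *m e) ord0 ord0.

Definition normalized_perron (n : nat) (p : 'cV[R]_n) : 'cV[R]_n :=
  (Num.sqrt n%:R / Num.sqrt (\sum_i p i ord0 ^+ 2)) *: p.

Definition reweighted_adjacency (n : nat) (A : 'M[R]_n) (p : 'cV[R]_n)
  : 'M[R]_n :=
  let P' := diag_mx (normalized_perron p)^T in P' *m A *m P'.

End Defs.

(* With K := rho I - A, eps := 1/alpha and t = (rho + eps)^-1, the resolvent is
   (I - t A)^-1 = (rho + eps) (K + eps I)^-1.  K is positive semidefinite with
   kernel spanned by p (connectivity), so (K + eps I)^-1 = p p^T / (eps |p|^2) + G
   + O(eps), where G is the group inverse of K.  Hence
   ln r_kl = c(eps) + ln p_k + ln p_l + eps |p|^2 G_kl / (p_k p_l) + O(eps^2);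
   the first three terms cancel in (ln r_ii + ln r_jj) / 2 - ln r_ij, and as
   theta(alpha) ~ 2 alpha / n the long walk distance is
   |p|^2 / n * (g_ii + g_jj - 2 g_ij) with g_kl = G_kl / (p_k p_l).
   On the other side, with D := diag p the Laplacian of G' is (n / |p|^2) D K D,
   and (|p|^2 / n) C D^-1 G D^-1 C, C the centering projector, is its
   Moore-Penrose inverse; this gives the same value for the resistance. *)

From mathcomp Require Import all_boot all_order all_algebra.
From mathcomp Require Import all_classical all_reals all_analysis.
From mathcomp Require Import ring lra.
Import Order.TTheory GRing.Theory Num.Theory numFieldNormedType.Exports.
Set Implicit Arguments. Unset Strict Implicit. Unset Printing Implicit Defensive.
Local Open Scope classical_set_scope.
Local Open Scope ring_scope.

(** * Asymptotics of logarithms *)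

Section Logarithms.
Variable R : realType.
Implicit Types (a f h : R -> R) (l C x : R).

Lemma ln1Dx_sub_le x : `|x| <= 2^-1 -> `|ln (1 + x) - x| <= 2 * x ^+ 2.
Proof.
rewrite ler_norml => /andP [hx1 hx2]; have p1 : 0 < 1 + x by lra.
have up : ln (1 + x) <= x by apply: le_ln1Dx; lra.
have lo : x / (1 + x) <= ln (1 + x).
  have h : -1 < (1 + x)^-1 - 1 by rewrite ltrBrDr addNr invr_gt0.
  have := le_ln1Dx h; rewrite addrC subrK lnV ?posrE //.
  have -> : (1 + x)^-1 - 1 = - (x / (1 + x)) by field; rewrite gt_eqF.
  lra.
have : x - x / (1 + x) <= 2 * x ^+ 2.
  have -> : x - x / (1 + x) = x ^+ 2 / (1 + x) by field; rewrite gt_eqF.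
  rewrite ler_pdivrMr //; nra.
rewrite ler0_norm ?subr_le0 //; lra.
Qed.

Lemma ln_ratio_cancel (c a b u v w : R) :
  0 < c -> 0 < a -> 0 < b -> 0 < u -> 0 < v -> 0 < w ->
  2^-1 * (ln (c * a * a * u) + ln (c * b * b * v)) - ln (c * a * b * w) =
  2^-1 * (ln u + ln v) - ln w.
Proof.
move=> c0 a0 b0 u0 v0 w0.
have lnM4 x y z t : 0 < x -> 0 < y -> 0 < z -> 0 < t ->
    ln (x * y * z * t) = ln x + ln y + ln z + ln t.
  by move=> *; rewrite !lnM ?posrE ?mulr_gt0.
by rewrite !lnM4 //; field.
Qed.

Lemma ln_cvgy : @ln R x @[x --> +oo] --> +oo.
Proof.
apply/cvgryPge => M; near=> x.
rewrite -ler_expR lnK ?posrE; last by near: x; apply: nbhs_pinfty_gt.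
by apply: ltW; near: x; apply: nbhs_pinfty_gt; exact: num_real.
Unshelve. all: end_near. Qed.

Lemma cvgr_dist_le_div h f l C : h x @[x --> +oo] --> +oo ->
  (\forall x \near +oo, `|f x - l| <= C / h x) -> f x @[x --> +oo] --> l.
Proof.
move=> hy fh.
have h0 : \forall x \near +oo, 0 < h x by move/cvgryPgt : hy; apply.
have Ch : (fun x => C * (h x)^-1) @ +oo --> 0.
  rewrite -(mulr0 C); apply: cvgMr.
  exact/(gtr0_cvgV0 h0).
apply: (@squeeze_cvgr _ _ _ _ (fun x => l - C / h x) (fun x => l + C / h x)).
- by apply: filterS fh => x; rewrite -ler_distl distrC.
- by rewrite -[l in _ --> l]subr0; apply: cvgB => //; exact: cvg_cst.
- by rewrite -[l in _ --> l]addr0; apply: cvgD => //; exact: cvg_cst.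
Unshelve. all: end_near. Qed.

Lemma near_ln1D_div_gt0 a l : a x @[x --> +oo] --> l ->
  \forall x \near +oo, 0 < 1 + a x / x.
Proof.
move=> ha; near=> x.
have x0 : 0 < x by near: x; apply: nbhs_pinfty_gt.
have aB : `|a x| <= `|l| + 1 by near: x; apply: cvgr_norm_le _ ha _ _; rewrite ltrDl.
have Bx : `|l| + 1 < x by near: x; apply: nbhs_pinfty_gt; exact: num_real.
rewrite ler_norml in aB; rewrite -ltrBlDl sub0r ltr_pdivlMr //; lra.
Unshelve. all: end_near. Qed.

Lemma cvg_mulx_ln1D_div a l : a x @[x --> +oo] --> l ->
  (x * ln (1 + a x / x)) @[x --> +oo] --> l.
Proof.
move=> ha; set B := `|l| + 1.
suff: (fun x => x * ln (1 + a x / x) - a x) @ +oo --> 0.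
  by move=> h0; apply: cvg_sub0 ha; apply: h0.
apply: (@cvgr_dist_le_div id _ _ (2 * B ^+ 2)); first exact: cvg_id.
near=> x.
have x0 : 0 < x by near: x; apply: nbhs_pinfty_gt.
have aB : `|a x| <= B by near: x; apply: cvgr_norm_le _ ha _ _; rewrite ltrDl.
have Bx : 2 * B <= x by apply: ltW; near: x; apply: nbhs_pinfty_gt; exact: num_real.
have y_le : `|a x / x| <= 2^-1.
  rewrite normrM normfV (gtr0_norm x0) ler_pdivrMr //; lra.
have xy : x * (a x / x) = a x by rewrite mulrC divfK // gt_eqF.
rewrite /= subr0 -{2}xy -mulrBr normrM (gtr0_norm x0).
apply: le_trans (ler_wpM2l (ltW x0) (ln1Dx_sub_le y_le)) _.
have -> : x * (2 * (a x / x) ^+ 2) = 2 * a x ^+ 2 / x by field; rewrite gt_eqF.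
rewrite ler_pM2r ?invr_gt0 // ler_pM2l //; rewrite ler_norml in aB; nra.
Unshelve. all: end_near. Qed.

(* With c = 2/n: ln (e + x^c) = c ln x + r where 0 <= r <= e, hence
   theta n x / x - c = O(1 / ln x). *)
Lemma theta_div_cvg n : (0 < n)%N -> (theta n x / x) @[x --> +oo] --> (2 / n%:R : R).
Proof.
move=> n0; set c : R := 2 / n%:R; set E := expR (1 : R).
have c0 : 0 < c by rewrite divr_gt0 // ltr0n.
have E0 : 0 < E by exact: expR_gt0.
apply: (@cvgr_dist_le_div (@ln R) _ _ (E + c) ln_cvgy).
near=> x.
have x1 : 1 < x by near: x; apply: nbhs_pinfty_gt.
set L := ln x; have L0 : 0 < L by exact: ln_gt0.
have Lx : L < x by apply: ln_sublinear; lra.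
set u := x `^ c.
have u1 : 1 <= u by rewrite /u -[leLHS](powRr0 x); apply: ler_powR; [lra | exact: ltW].
set r := ln (1 + E / u).
have Eu0 : 0 <= E / u by rewrite divr_ge0 // ltW //; lra.
have r0 : 0 <= r by rewrite /r ln_ge0 // lerDl.
have rE : r <= E.
  apply: le_trans (le_ln1Dx _) _; first lra.
  rewrite ler_pdivrMr; [nra | lra].
have lnEu : ln (E + u) = c * L + r.
  have -> : E + u = u * (1 + E / u) by field; rewrite gt_eqF //; lra.
  by rewrite lnM ?posrE ?ln_powR //; lra.
have -> : theta n x / x - c = r * ((x - 1) / x) / L - c / x.
  by rewrite /theta -/E -/u lnEu -/L -/c; field; rewrite !gt_eqF //; lra.
have q0 : 0 <= (x - 1) / x by rewrite divr_ge0; lra.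
have q1 : (x - 1) / x <= 1 by rewrite ler_pdivrMr; lra.
have t1 : 0 <= r * ((x - 1) / x) / L by apply: divr_ge0; [exact: mulr_ge0 | exact: ltW].
have t2 : r * ((x - 1) / x) / L <= E / L by rewrite ler_pM2r ?invr_gt0 //; nra.
have t3 : 0 <= c / x by rewrite divr_ge0 ?ltW //; lra.
have t4 : c / x <= c / L by rewrite ler_pM2l // lef_pV2 ?posrE ?ltW //; lra.
rewrite mulrDl ler_norml; apply/andP; split; lra.
Unshelve. all: end_near. Qed.

End Logarithms.

(** * Quadratic forms, an entrywise matrix norm, Moore-Penrose inverses *)

Section QuadraticForm.
Variables (R : comNzRingType) (n : nat).
Implicit Types (M : 'M[R]_n) (u v : 'rV[R]_n).

Definition qform M v : R := (v *m M *m v^T) ord0 ord0.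

Lemma qformE M v : qform M v = \sum_i \sum_j v ord0 i * M i j * v ord0 j.
Proof.
rewrite /qform mxE exchange_big /=; apply: eq_bigr => j _.
by rewrite !mxE big_distrl.
Qed.

Lemma qformD M1 M2 v : qform (M1 + M2) v = qform M1 v + qform M2 v.
Proof. by rewrite /qform mulmxDr mulmxDl mxE. Qed.

Lemma qformZ c M v : qform (c *: M) v = c * qform M v.
Proof. by rewrite /qform -scalemxAr -scalemxAl mxE. Qed.

Lemma qform1 v : qform 1%:M v = \sum_i v ord0 i ^+ 2.
Proof. by rewrite /qform mulmx1 mxE; apply: eq_bigr => i _; rewrite mxE. Qed.

Lemma qform_outer (w : 'cV[R]_n) v : qform (w *m w^T) v = (v *m w) ord0 ord0 ^+ 2.
Proof.
rewrite /qform (_ : v *m (w *m w^T) *m v^T = (v *m w) *m (v *m w)^T).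
  by rewrite mxE big_ord1 !mxE expr2.
by rewrite trmx_mul !mulmxA.
Qed.

Lemma qform_ker M v : v *m M = 0 -> qform M v = 0.
Proof. by move=> vM; rewrite /qform vM mul0mx mxE. Qed.

Lemma delta_quad (M : 'M[R]_n) i j :
  ((delta_mx i ord0 : 'cV_n)^T *m M *m (delta_mx j ord0 : 'cV_n)) ord0 ord0 = M i j.
Proof. by rewrite trmx_delta -rowE -colE !mxE. Qed.

Lemma delta_quadB (M : 'M[R]_n) i j :
  let e : 'cV_n := delta_mx i ord0 - delta_mx j ord0 in
  (e^T *m M *m e) ord0 ord0 = M i i - M i j - M j i + M j j.
Proof.
move=> e; have eT : e^T = (delta_mx i ord0 : 'cV_n)^T - (delta_mx j ord0 : 'cV_n)^T.
  by rewrite /e linearB.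
have entryB (U V : 'M[R]_1) : (U - V) ord0 ord0 = U ord0 ord0 - V ord0 ord0.
  by rewrite !mxE.
rewrite eT /e !mulmxBl !mulmxBr !entryB !delta_quad; ring.
Qed.

End QuadraticForm.

Lemma unitmx_ker0 (F : fieldType) n (M : 'M[F]_n) :
  (forall v : 'rV[F]_n, v *m M = 0 -> v = 0) -> M \in unitmx.
Proof.
move=> ker0; rewrite unitmxE unitfE; apply/negP => /det0P [v v0 vM].
by rewrite (ker0 v vM) eqxx in v0.
Qed.

Section EntrywiseNorm.
Variable R : numDomainType.

Definition mxnorm1 m n (M : 'M[R]_(m, n)) : R := \sum_i \sum_j `|M i j|.

Lemma mxnorm1_ge0 m n (M : 'M[R]_(m, n)) : 0 <= mxnorm1 M.
Proof. by apply: sumr_ge0 => i _; apply: sumr_ge0. Qed.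

Lemma row_le_mxnorm1 m n (M : 'M[R]_(m, n)) i : \sum_j `|M i j| <= mxnorm1 M.
Proof.
rewrite /mxnorm1 (bigD1 i) //= lerDl.
by apply: sumr_ge0 => k _; apply: sumr_ge0.
Qed.

Lemma entry_le_mxnorm1 m n (M : 'M[R]_(m, n)) i j : `|M i j| <= mxnorm1 M.
Proof.
apply: le_trans (row_le_mxnorm1 M i).
by rewrite (bigD1 j) //= lerDl sumr_ge0.
Qed.

Lemma mxnorm1D m n (M N : 'M[R]_(m, n)) : mxnorm1 (M + N) <= mxnorm1 M + mxnorm1 N.
Proof.
rewrite /mxnorm1 -big_split /=; apply: ler_sum => i _.
by rewrite -big_split /=; apply: ler_sum => j _; rewrite mxE ler_normD.
Qed.

Lemma mxnorm1N m n (M : 'M[R]_(m, n)) : mxnorm1 (- M) = mxnorm1 M.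
Proof. by apply: eq_bigr => i _; apply: eq_bigr => j _; rewrite mxE normrN. Qed.

Lemma mxnorm1Z m n c (M : 'M[R]_(m, n)) : mxnorm1 (c *: M) = `|c| * mxnorm1 M.
Proof.
rewrite /mxnorm1 mulr_sumr; apply: eq_bigr => i _; rewrite mulr_sumr.
by apply: eq_bigr => j _; rewrite mxE normrM.
Qed.

Lemma mxnorm1M m n k (M : 'M[R]_(m, n)) (N : 'M[R]_(n, k)) :
  mxnorm1 (M *m N) <= mxnorm1 M * mxnorm1 N.
Proof.
apply: (@le_trans _ _ (\sum_i \sum_l `|M i l| * \sum_j `|N l j|)).
  apply: ler_sum => i _.
  apply: (@le_trans _ _ (\sum_j \sum_l `|M i l| * `|N l j|)).
    apply: ler_sum => j _; rewrite mxE; apply: le_trans (ler_norm_sum _ _ _) _.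
    by apply: ler_sum => l _; rewrite normrM.
  by rewrite exchange_big /=; apply: ler_sum => l _; rewrite mulr_sumr.
rewrite /mxnorm1 mulr_suml; apply: ler_sum => i _; rewrite mulr_suml.
by apply: ler_sum => l _; apply: ler_wpM2l => //; exact: row_le_mxnorm1.
Qed.

End EntrywiseNorm.

Section MoorePenrose.
Variables (R : realType) (n : nat).
Implicit Types L X P Y : 'M[R]_n.

Lemma moore_penrose_of_proj L X P :
  L *m X = P -> X *m L = P -> P^T = P -> P *m L = L -> X *m P = X ->
  is_moore_penrose L X.
Proof.
move=> LX XL Psym PL XP; split; last by rewrite XL.
- by rewrite LX.
- by rewrite -mulmxA LX.
- by rewrite LX.
Qed.

Lemma mp_inverse_spec L X : is_moore_penrose L X -> is_moore_penrose L (mp_inverse L).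
Proof. by move=> LX; apply: (xgetI _ LX). Qed.

Lemma moore_penrose_quad_range L Y (u e : 'cV[R]_n) :
  L^T = L -> is_moore_penrose L Y -> L *m u = e ->
  e^T *m Y *m e = u^T *m L *m u.
Proof.
move=> Lsym [LYL _ _ _] <-.
by rewrite trmx_mul Lsym -[in RHS]LYL !mulmxA.
Qed.

End MoorePenrose.

Section Centering.
Variables (R : numFieldType) (n : nat).
Hypothesis n_gt0 : (0 < n)%N.

Definition ones : 'cV[R]_n := const_mx 1.

Definition centering : 'M[R]_n := 1%:M - n%:R^-1 *: (ones *m ones^T).

Lemma onesT_ones : ones^T *m ones = n%:R%:M.
Proof.
apply/matrixP => a b; rewrite !ord1 !mxE /= mulr1n.
under eq_bigr do rewrite !mxE mulr1.
by rewrite sumr_const card_ord.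
Qed.

Lemma centering_sym : centering^T = centering.
Proof. by rewrite /centering linearB linearZ /= tr_scalar_mx trmx_mul trmxK. Qed.

Lemma onesT_centering : ones^T *m centering = 0.
Proof.
rewrite /centering mulmxBr mulmx1 -scalemxAr mulmxA onesT_ones mul_scalar_mx.
by rewrite scalerA mulVf ?scale1r ?subrr // pnatr_eq0 -lt0n.
Qed.

Lemma centering_idem : centering *m centering = centering.
Proof.
by rewrite {1}/centering mulmxBl mul1mx -scalemxAl -mulmxA onesT_centering mulmx0
  scaler0 subr0.
Qed.

Lemma centering_id (v : 'cV[R]_n) : ones^T *m v = 0 -> centering *m v = v.
Proof.
by move=> v0; rewrite /centering mulmxBl mul1mx -scalemxAl -mulmxA v0 mulmx0
  scaler0 subr0.
Qed.

Lemma onesT_delta i : ones^T *m (delta_mx i ord0 : 'cV[R]_n) = 1%:M.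
Proof. by rewrite -colE; apply/matrixP => a b; rewrite !ord1 !mxE. Qed.

End Centering.

Arguments ones {R n}.
Arguments centering {R n}.

(** * The matrix [rho I - A] and the long walk distance *)

Section PerronGap.
Variables (R : realType) (n : nat) (A : 'M[R]_n) (rho : R) (p : 'cV[R]_n).
Hypothesis A_sym : A^T = A.
Hypothesis A_ge0 : forall i j, 0 <= A i j.
Hypothesis A_connected : connected_graph A.
Hypothesis Ap : A *m p = rho *: p.
Hypothesis p_gt0 : forall i, 0 < p i ord0.
Hypothesis n_gt0 : (0 < n)%N.

Definition perron_gap : 'M[R]_n := rho%:M - A.

Definition pnorm2 : R := \sum_i p i ord0 ^+ 2.

Definition perron_proj : 'M[R]_n := pnorm2^-1 *: (p *m p^T).

Lemma A_symmetric i j : A i j = A j i.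
Proof. by rewrite -{1}A_sym mxE. Qed.

Lemma perron_rowsum i : \sum_j A i j * p j ord0 = rho * p i ord0.
Proof. by have /matrixP/(_ i ord0) := Ap; rewrite !mxE. Qed.

Lemma rho_ge0 : 0 <= rho.
Proof.
pose i := Ordinal n_gt0; have := perron_rowsum i; have := p_gt0 i.
have : 0 <= \sum_j A i j * p j ord0.
  by apply: sumr_ge0 => j _; exact: mulr_ge0 (A_ge0 _ _) (ltW (p_gt0 _)).
move=> sum_ge0 pi_gt0 rowsum; nra.
Qed.

Lemma pnorm2_gt0 : 0 < pnorm2.
Proof.
rewrite /pnorm2 (bigD1 (Ordinal n_gt0)) //= ltr_pwDl ?exprn_gt0 //.
by apply: sumr_ge0 => i _; rewrite sqr_ge0.
Qed.

(* Writing v_i = x_i p_i, the diagonal part rho v_i^2 is split with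
   rho p_i = \sum_j A_ij p_j, once in i and once (by symmetry) in j. *)
Lemma qform_perron_gap v : qform perron_gap v = 2^-1 * \sum_i \sum_j
  A i j * p i ord0 * p j ord0 * (v ord0 i / p i ord0 - v ord0 j / p j ord0) ^+ 2.
Proof.
set x := fun k => v ord0 k / p k ord0.
have vx k : v ord0 k = x k * p k ord0 by rewrite /x divfK // gt_eqF.
have diag_i : \sum_i \sum_j A i j * p i ord0 * p j ord0 * x i ^+ 2 =
    rho * \sum_i v ord0 i ^+ 2.
  rewrite mulr_sumr; apply: eq_bigr => i _.
  transitivity (x i ^+ 2 * p i ord0 * \sum_j A i j * p j ord0).
    by rewrite mulr_sumr; apply: eq_bigr => j _; ring.
  by rewrite perron_rowsum vx; ring.
have diag_j : \sum_i \sum_j A i j * p i ord0 * p j ord0 * x j ^+ 2 =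
    rho * \sum_i v ord0 i ^+ 2.
  rewrite exchange_big -diag_i; apply: eq_bigr => i _; apply: eq_bigr => j _.
  by rewrite A_symmetric; ring.
have off : \sum_i \sum_j A i j * p i ord0 * p j ord0 * (x i * x j) =
    \sum_i \sum_j v ord0 i * A i j * v ord0 j.
  by apply: eq_bigr => i _; apply: eq_bigr => j _; rewrite !vx; ring.
have gap : qform perron_gap v =
    rho * \sum_i v ord0 i ^+ 2 - \sum_i \sum_j v ord0 i * A i j * v ord0 j.
  rewrite /perron_gap qformD -scalemx1 qformZ qform1 qformE -sumrN; congr (_ + _).
  by apply: eq_bigr => i _; rewrite -sumrN; apply: eq_bigr => j _; rewrite mxE; ring.
have expand : \sum_i \sum_j A i j * p i ord0 * p j ord0 * (x i - x j) ^+ 2 =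
    \sum_i \sum_j A i j * p i ord0 * p j ord0 * x i ^+ 2 +
    \sum_i \sum_j A i j * p i ord0 * p j ord0 * x j ^+ 2 -
    2 * \sum_i \sum_j A i j * p i ord0 * p j ord0 * (x i * x j).
  rewrite mulr_sumr -!big_split -sumrB; apply: eq_bigr => i _ /=.
  by rewrite mulr_sumr -!big_split -sumrB; apply: eq_bigr => j _ /=; ring.
by rewrite gap expand diag_i diag_j off; field.
Qed.

Lemma qform_perron_gap_ge0 v : 0 <= qform perron_gap v.
Proof.
rewrite qform_perron_gap mulr_ge0 //; apply: sumr_ge0 => i _; apply: sumr_ge0 => j _.
by rewrite mulr_ge0 ?sqr_ge0 // !mulr_ge0 // ltW.
Qed.

(* Each edge forces v_i / p_i = v_j / p_j, and connectivity propagates it. *)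
Lemma qform_perron_gap_eq0 v :
  qform perron_gap v = 0 -> exists c, forall k, v ord0 k = c * p k ord0.
Proof.
rewrite qform_perron_gap => /eqP; rewrite mulf_eq0 invr_eq0 pnatr_eq0 /= => /eqP.
set x := fun k => v ord0 k / p k ord0; move=> sum0.
have term_ge0 i j : 0 <= A i j * p i ord0 * p j ord0 * (x i - x j) ^+ 2.
  by rewrite mulr_ge0 ?sqr_ge0 // !mulr_ge0 // ltW.
have row_ge0 i : 0 <= \sum_j A i j * p i ord0 * p j ord0 * (x i - x j) ^+ 2.
  exact: sumr_ge0.
have edge i j : adj_rel A i j -> x i = x j.
  case/andP => _ Aij.
  have row0 := psumr_eq0P (fun k _ => row_ge0 k) sum0 (i := i) isT.
  move: (psumr_eq0P (fun l _ => term_ge0 i l) row0 (i := j) isT) => /eqP.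
  rewrite mulf_eq0 expf_eq0 /= subr_eq0 !mulf_eq0.
  by rewrite (gt_eqF Aij) (gt_eqF (p_gt0 i)) (gt_eqF (p_gt0 j)) => /eqP.
have const i j : x i = x j.
  have /connectP [s path_s ->] := A_connected i j.
  elim: s i path_s => [|k s IH] i //= /andP [ik path_s].
  by rewrite (edge _ _ ik); exact: IH.
exists (x (Ordinal n_gt0)) => k.
by rewrite -(const k) /x divfK // gt_eqF.
Qed.

Lemma perron_gap_sym : perron_gap^T = perron_gap.
Proof. by rewrite /perron_gap linearB /= tr_scalar_mx A_sym. Qed.

Lemma perron_gap_p : perron_gap *m p = 0.
Proof. by rewrite /perron_gap mulmxBl mul_scalar_mx Ap subrr. Qed.

Lemma pT_p : p^T *m p = pnorm2%:M.
Proof.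
apply/matrixP => a b; rewrite !ord1 !mxE /= mulr1n.
by apply: eq_bigr => k _; rewrite mxE expr2.
Qed.

Lemma perron_proj_sym : perron_proj^T = perron_proj.
Proof. by rewrite /perron_proj linearZ /= trmx_mul trmxK. Qed.

Lemma perron_proj_p : perron_proj *m p = p.
Proof.
rewrite /perron_proj -scalemxAl -mulmxA pT_p mul_mx_scalar scalerA.
by rewrite mulVf ?scale1r // gt_eqF // pnorm2_gt0.
Qed.

Lemma perron_gap_proj : perron_gap *m perron_proj = 0.
Proof. by rewrite /perron_proj -scalemxAr mulmxA perron_gap_p mul0mx scaler0. Qed.

Lemma perron_gap_addI_unit e : 0 < e -> perron_gap + e%:M \in unitmx.
Proof.
move=> e0; apply: unitmx_ker0 => v /qform_ker.
rewrite qformD -scalemx1 qformZ qform1 => /eqP.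
rewrite paddr_eq0 ?qform_perron_gap_ge0 ?mulr_ge0 ?sumr_ge0 ?ltW // => [|i _];
  last exact: sqr_ge0.
rewrite mulf_eq0 (gt_eqF e0) /= => /andP [_ /eqP sq0].
apply/rowP => k; rewrite mxE.
have := psumr_eq0P (fun i _ => sqr_ge0 (v ord0 i)) sq0 (i := k) isT.
by move/eqP; rewrite sqrf_eq0 => /eqP.
Qed.

Lemma perron_gap_add_proj_unit : perron_gap + perron_proj \in unitmx.
Proof.
apply: unitmx_ker0 => v /qform_ker.
rewrite qformD /perron_proj qformZ qform_outer => /eqP.
rewrite paddr_eq0 ?qform_perron_gap_ge0 //; last first.
  by rewrite mulr_ge0 ?sqr_ge0 // invr_ge0 ltW // pnorm2_gt0.
rewrite mulf_eq0 invr_eq0 (gt_eqF pnorm2_gt0) sqrf_eq0 /=.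
case/andP => /eqP /qform_perron_gap_eq0 [c vc] /eqP vp.
have c0 : c * pnorm2 = 0.
  rewrite -vp mxE /pnorm2 mulr_sumr; apply: eq_bigr => k _; rewrite vc; ring.
move/eqP: c0; rewrite mulf_eq0 (gt_eqF pnorm2_gt0) orbF => /eqP c0.
by apply/rowP => k; rewrite vc c0 mul0r mxE.
Qed.

(* The group inverse of [perron_gap]: it inverts [perron_gap] on the orthogonal
   complement of [p] and vanishes on [p]. *)
Definition perron_gap_ginv : 'M[R]_n := invmx (perron_gap + perron_proj) - perron_proj.

Local Notation G := perron_gap_ginv.

Lemma perron_gap_ginv_sym : G^T = G.
Proof.
by rewrite /G linearB /= trmx_inv linearD /= perron_gap_sym perron_proj_sym.
Qed.

Lemma invmx_gap_proj_p : invmx (perron_gap + perron_proj) *m p = p.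
Proof.
have Hp : (perron_gap + perron_proj) *m p = p.
  by rewrite mulmxDl perron_gap_p perron_proj_p add0r.
by rewrite -{1}Hp mulKmx // perron_gap_add_proj_unit.
Qed.

Lemma perron_gap_ginv_p : G *m p = 0.
Proof. by rewrite /G mulmxBl invmx_gap_proj_p perron_proj_p subrr. Qed.

Lemma perron_proj_ginv : perron_proj *m G = 0.
Proof.
rewrite -perron_proj_sym -perron_gap_ginv_sym -trmx_mul.
by rewrite /perron_proj -scalemxAr mulmxA perron_gap_ginv_p mul0mx scaler0 trmx0.
Qed.

Lemma perron_gap_ginvE : perron_gap *m G = 1%:M - perron_proj.
Proof.
have pH : p^T *m invmx (perron_gap + perron_proj) = p^T.
  by rewrite -[in RHS]invmx_gap_proj_p trmx_mul trmx_inv linearD /= perron_gap_sym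
    perron_proj_sym.
rewrite /G mulmxBr perron_gap_proj subr0.
set H := perron_gap + perron_proj in pH *.
have -> : perron_gap = H - perron_proj by rewrite /H addrK.
rewrite mulmxBl mulmxV ?perron_gap_add_proj_unit //.
by rewrite /perron_proj -!scalemxAl -mulmxA pH.
Qed.

Definition resolvent_rem e : 'M[R]_n :=
  invmx (perron_gap + e%:M) - e^-1 *: perron_proj.

Lemma resolvent_rem_fix e : 0 < e ->
  G = resolvent_rem e + e *: (resolvent_rem e *m G).
Proof.
move=> e0; set M := perron_gap + e%:M.
have Mp : M *m p = e *: p by rewrite mulmxDl perron_gap_p add0r mul_scalar_mx.
have Yp : invmx M *m p = e^-1 *: p.
  have pE : p = e^-1 *: (M *m p) by rewrite Mp scalerA mulVf ?scale1r ?lt0r_neq0.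
  by rewrite {1}pE -scalemxAr mulKmx // perron_gap_addI_unit.
have MG : M *m G = 1%:M - perron_proj + e *: G.
  by rewrite mulmxDl perron_gap_ginvE mul_scalar_mx.
rewrite -[G in LHS](mulKmx (perron_gap_addI_unit e0)) -/M MG mulmxDr mulmxBr mulmx1.
rewrite -scalemxAr /resolvent_rem mulmxBl -scalemxAl perron_proj_ginv scaler0 subr0.
by rewrite /perron_proj -!scalemxAr mulmxA Yp -scalemxAl !scalerA mulrC.
Qed.

(* [G] solves [G = N + e N G] with [N = resolvent_rem e]; for [e |G|_1 <= 1/2]
   this first gives [|N|_1 <= 2 |G|_1], then [N - G = O(e)]. *)
Lemma resolvent_rem_bound e : 0 < e -> e * mxnorm1 G <= 2^-1 ->
  forall k l, `|resolvent_rem e k l - G k l| <= e * (2 * mxnorm1 G ^+ 2).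
Proof.
move=> e0 small k l; set N := resolvent_rem e.
have NG : N - G = - (e *: (N *m G)).
  by rewrite {1}(resolvent_rem_fix e0) -/N opprD addrA subrr add0r.
have normNG : mxnorm1 (N - G) <= e * (mxnorm1 N * mxnorm1 G).
  rewrite NG mxnorm1N mxnorm1Z gtr0_norm //.
  by apply: ler_wpM2l; [exact: ltW | exact: mxnorm1M].
have normN : mxnorm1 N <= 2 * mxnorm1 G.
  have : mxnorm1 N <= mxnorm1 G + mxnorm1 (N - G).
    by rewrite -[N in mxnorm1 N](subrK G) addrC mxnorm1D.
  have := mxnorm1_ge0 G; have := mxnorm1_ge0 N; nra.
have := entry_le_mxnorm1 (N - G) k l; rewrite !mxE => entryNG.
apply: le_trans entryNG (le_trans normNG _); rewrite expr2 mulrA.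
by apply: ler_wpM2l; [exact: ltW | apply: ler_wpM2r; [exact: mxnorm1_ge0 | nra]].
Qed.

Lemma resolvent_rem_cvg k l : resolvent_rem x^-1 k l @[x --> +oo] --> G k l.
Proof.
apply: (@cvgr_dist_le_div _ id _ _ (2 * mxnorm1 G ^+ 2) cvg_id); near=> x.
have x0 : 0 < x by near: x; apply: nbhs_pinfty_gt.
have Gx : 2 * mxnorm1 G <= x.
  by apply: ltW; near: x; apply: nbhs_pinfty_gt; exact: num_real.
rewrite [_ / id x]mulrC; apply: resolvent_rem_bound; first by rewrite invr_gt0.
by rewrite mulrC ler_pdivrMr //; lra.
Unshelve. all: end_near. Qed.

Lemma resolventE x : 0 < x ->
  resolvent A rho x = (rho + x^-1) *: invmx (perron_gap + x^-1%:M).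
Proof.
move=> x0; have e0 : 0 < x^-1 by rewrite invr_gt0.
have re0 : 0 < rho + x^-1 by have := rho_ge0; lra.
rewrite /resolvent.
have -> : 1%:M - (rho + x^-1)^-1 *: A = (rho + x^-1)^-1 *: (perron_gap + x^-1%:M).
  apply/matrixP => k l; rewrite /perron_gap !mxE.
  have := rho_ge0; case: (k == l); rewrite ?mulr1n ?mulr0n => rho0;
    by field; rewrite !gt_eqF //; nra.
rewrite invmxZ ?invrK // unitmxZ ?perron_gap_addI_unit //.
by rewrite unitfE invr_eq0 gt_eqF.
Qed.

Definition ginv_scaled k l := G k l / (p k ord0 * p l ord0).

Definition resolvent_coef x k l :=
  pnorm2 * (resolvent_rem x^-1 k l / (p k ord0 * p l ord0)).

Lemma resolvent_coef_cvg k l :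
  resolvent_coef x k l @[x --> +oo] --> pnorm2 * ginv_scaled k l.
Proof. by apply: cvgMr; apply: cvgMl; exact: resolvent_rem_cvg. Qed.

Lemma resolvent_entry x k l : 0 < x -> resolvent A rho x k l =
  (rho + x^-1) * x / pnorm2 * p k ord0 * p l ord0 * (1 + resolvent_coef x k l / x).
Proof.
move=> x0; rewrite resolventE // mxE /resolvent_coef.
have -> : invmx (perron_gap + x^-1%:M) k l =
    resolvent_rem x^-1 k l + x / pnorm2 * (p k ord0 * p l ord0).
  rewrite /resolvent_rem /perron_proj invrK !mxE big_ord1 !mxE; ring.
have := p_gt0 k; have := p_gt0 l; have := pnorm2_gt0 => s0 pl pk.
by field; rewrite !gt_eqF // mulr_gt0.
Qed.

Lemma lw_expr_cvg i j : lw_expr A rho i j x @[x --> +oo] -->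
  pnorm2 / n%:R * (ginv_scaled i i + ginv_scaled j j - 2 * ginv_scaled i j).
Proof.
have -> : pnorm2 / n%:R * (ginv_scaled i i + ginv_scaled j j - 2 * ginv_scaled i j) =
    2 / n%:R * (2^-1 * (pnorm2 * ginv_scaled i i + pnorm2 * ginv_scaled j j) -
                pnorm2 * ginv_scaled i j).
  by field; rewrite pnatr_eq0 -lt0n.
have log_cvg k l := cvg_mulx_ln1D_div (@resolvent_coef_cvg k l).
apply: (cvg_trans _ (cvgM (theta_div_cvg n_gt0)
  (cvgB (cvgMr (cvgD (log_cvg i i) (log_cvg j j))) (log_cvg i j)))).
apply: near_eq_cvg; near=> x.
have x0 : 0 < x by near: x; apply: nbhs_pinfty_gt.
have c0 : 0 < (rho + x^-1) * x / pnorm2.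
  have := rho_ge0; have : 0 < x^-1 by rewrite invr_gt0.
  by move=> ? ?; apply: divr_gt0; [apply: mulr_gt0 => //; lra | exact: pnorm2_gt0].
rewrite /lw_expr !resolvent_entry // ln_ratio_cancel //; last 3 first.
- by near: x; exact: near_ln1D_div_gt0 (@resolvent_coef_cvg i i).
- by near: x; exact: near_ln1D_div_gt0 (@resolvent_coef_cvg j j).
- by near: x; exact: near_ln1D_div_gt0 (@resolvent_coef_cvg i j).
by rewrite /= !fctE /=; field; exact: lt0r_neq0.
Unshelve. all: end_near. Qed.

(** * The Laplacian of the reweighted graph and the resistance distance *)

Definition pdiag : 'M[R]_n := diag_mx p^T.

Definition pdiag_inv : 'M[R]_n := diag_mx (\row_k (p k ord0)^-1).

Lemma pdiag_ones : pdiag *m ones = p.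
Proof. by apply/matrixP => k a; rewrite mul_diag_mx !mxE mulr1 ord1. Qed.

Lemma pT_pdiag_inv : p^T *m pdiag_inv = ones^T.
Proof.
apply/matrixP => a k; rewrite mul_mx_diag !mxE ord1 mulfV //.
exact: lt0r_neq0.
Qed.

Lemma pdiag_invK : pdiag *m pdiag_inv = 1%:M.
Proof.
apply/matrixP => k l; rewrite mul_diag_mx !mxE.
by case: eqP => [->|_]; rewrite ?mulr1n ?mulr0n ?mulr0 // mulfV // lt0r_neq0.
Qed.

Lemma laplacian_reweighted : laplacian (reweighted_adjacency A p) =
  (n%:R / pnorm2) *: (pdiag *m perron_gap *m pdiag).
Proof.
set c := Num.sqrt n%:R / Num.sqrt pnorm2.
have c2 : c ^+ 2 = n%:R / pnorm2.
  by rewrite exprMn exprVn !sqr_sqrtr ?ler0n // ltW // pnorm2_gt0.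
have B_entry k l :
    reweighted_adjacency A p k l = c ^+ 2 * (p k ord0 * A k l * p l ord0).
  rewrite /reweighted_adjacency /normalized_perron mul_mx_diag mxE mul_diag_mx !mxE.
  by rewrite -/c; ring.
apply/matrixP => k l.
have -> : laplacian (reweighted_adjacency A p) k l =
    (\sum_j reweighted_adjacency A p k j) *+ (k == l) - reweighted_adjacency A p k l.
  by rewrite /laplacian !mxE.
rewrite B_entry.
have -> : \sum_j reweighted_adjacency A p k j = c ^+ 2 * (p k ord0 * (rho * p k ord0)).
  rewrite -perron_rowsum mulr_sumr mulr_sumr.
  by apply: eq_bigr => j _; rewrite B_entry; ring.
rewrite mul_mx_diag mxE mul_diag_mx !mxE -c2.
by case: eqP => [->|_]; rewrite ?mulr1n ?mulr0n; ring.
Qed.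

Definition laplacian_pinv : 'M[R]_n := (pnorm2 / n%:R) *:
  (centering *m pdiag_inv *m G *m pdiag_inv *m centering).

Lemma laplacian_pinv_sym : laplacian_pinv^T = laplacian_pinv.
Proof.
rewrite /laplacian_pinv linearZ /= !trmx_mul centering_sym perron_gap_ginv_sym.
by rewrite /pdiag_inv tr_diag_mx !mulmxA.
Qed.

Lemma perron_gap_pdiag_centering :
  perron_gap *m pdiag *m centering *m pdiag_inv = perron_gap.
Proof.
rewrite /centering mulmxBr mulmx1 -scalemxAr mulmxBl -scalemxAl !mulmxA.
rewrite -(mulmxA perron_gap pdiag ones) pdiag_ones perron_gap_p !mul0mx scaler0 subr0.
by rewrite -mulmxA pdiag_invK mulmx1.
Qed.

Lemma pdiag_perron_proj : pdiag *m (1%:M - perron_proj) *m pdiag_inv *m centering =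
  centering.
Proof.
have -> : pdiag *m (1%:M - perron_proj) *m pdiag_inv =
    1%:M - pnorm2^-1 *: (pdiag *m p *m ones^T).
  rewrite (mulmxBr pdiag) mulmx1 (mulmxBl pdiag) pdiag_invK /perron_proj.
  by rewrite -scalemxAr -scalemxAl !mulmxA -(mulmxA _ p^T) pT_pdiag_inv.
by rewrite mulmxBl mul1mx -scalemxAl -!mulmxA onesT_centering // !mulmx0 scaler0 subr0.
Qed.

Lemma laplacian_pinv_mulr : laplacian (reweighted_adjacency A p) *m laplacian_pinv =
  centering.
Proof.
rewrite laplacian_reweighted /laplacian_pinv -scalemxAl -scalemxAr scalerA.
have -> : n%:R / pnorm2 * (pnorm2 / n%:R) = 1 :> R.
  have n0 : n%:R != 0 :> R by rewrite pnatr_eq0 -lt0n.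
  by field; rewrite n0 (lt0r_neq0 pnorm2_gt0).
rewrite scale1r.
have -> : pdiag *m perron_gap *m pdiag *m
    (centering *m pdiag_inv *m G *m pdiag_inv *m centering) =
  pdiag *m (perron_gap *m pdiag *m centering *m pdiag_inv) *m G *m pdiag_inv *m
    centering by rewrite !mulmxA.
by rewrite perron_gap_pdiag_centering -(mulmxA pdiag) perron_gap_ginvE
  pdiag_perron_proj.
Qed.

Local Notation Lw := (laplacian (reweighted_adjacency A p)).

Lemma laplacian_reweighted_sym : Lw^T = Lw.
Proof.
by rewrite laplacian_reweighted linearZ /= !trmx_mul /pdiag tr_diag_mx perron_gap_sym
  !mulmxA.
Qed.

Lemma laplacian_reweighted_ones : Lw *m ones = 0.
Proof.
rewrite laplacian_reweighted -scalemxAl -mulmxA pdiag_ones.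
by rewrite -(mulmxA pdiag) perron_gap_p mulmx0 scaler0.
Qed.

Lemma laplacian_pinv_mull : laplacian_pinv *m Lw = centering.
Proof.
by rewrite -centering_sym -laplacian_pinv_mulr trmx_mul laplacian_reweighted_sym
  laplacian_pinv_sym.
Qed.

Lemma laplacian_pinv_mp : is_moore_penrose Lw laplacian_pinv.
Proof.
apply: (moore_penrose_of_proj laplacian_pinv_mulr laplacian_pinv_mull).
- exact: centering_sym.
- have onesL : ones^T *m Lw = 0.
    by rewrite -laplacian_reweighted_sym -trmx_mul laplacian_reweighted_ones trmx0.
  by rewrite /centering mulmxBl mul1mx -scalemxAl -mulmxA onesL mulmx0 scaler0 subr0.
- by rewrite /laplacian_pinv -scalemxAl -!mulmxA centering_idem.
Qed.

Lemma pdiag_inv_ginv_entry k l : (pdiag_inv *m G *m pdiag_inv) k l = ginv_scaled k l.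
Proof.
rewrite /ginv_scaled; set g := G; rewrite mul_mx_diag mul_diag_mx !mxE invfM; ring.
Qed.

Lemma resistance_reweighted i j : resistance_distance (reweighted_adjacency A p) i j =
  pnorm2 / n%:R * (ginv_scaled i i + ginv_scaled j j - 2 * ginv_scaled i j).
Proof.
rewrite /resistance_distance.
set e := (delta_mx i ord0 - delta_mx j ord0 : 'cV_n).
have Pe : centering *m e = e.
  by apply: centering_id => //; rewrite mulmxBr !onesT_delta subrr.
have eP : e^T *m centering = e^T by rewrite -centering_sym -trmx_mul Pe.
have LXe : Lw *m (laplacian_pinv *m e) = e by rewrite mulmxA laplacian_pinv_mulr Pe.
rewrite (moore_penrose_quad_range laplacian_reweighted_sym
  (mp_inverse_spec laplacian_pinv_mp) LXe).
have -> : (laplacian_pinv *m e)^T *m Lw *m (laplacian_pinv *m e) =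
    e^T *m laplacian_pinv *m e by rewrite trmx_mul laplacian_pinv_sym -mulmxA LXe.
rewrite /laplacian_pinv -scalemxAr -scalemxAl mxE.
have -> : e^T *m (centering *m pdiag_inv *m G *m pdiag_inv *m centering) *m e =
    e^T *m (pdiag_inv *m G *m pdiag_inv) *m e by rewrite -!mulmxA Pe !mulmxA eP.
rewrite /e delta_quadB !pdiag_inv_ginv_entry.
have -> : ginv_scaled j i = ginv_scaled i j.
  by rewrite /ginv_scaled (mulrC (p j ord0)) -{1}perron_gap_ginv_sym mxE.
ring.
Qed.
End PerronGap.

Theorem theorem8 (R : realType) (n : nat) (A : 'M[R]_n) (rho : R)
  (p : 'cV[R]_n) :
  (2 <= n)%N ->
  weighted_adjacency A ->
  connected_graph A ->
  is_spectral_radius A rho ->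
  is_perron_vector A rho p ->
  forall i j : 'I_n,
    lw_expr A rho i j alpha @[alpha --> +oo]
      --> resistance_distance (reweighted_adjacency A p) i j.
Proof.
move=> n_ge2 [A_sym A_ge0] A_conn _ [Ap [p_gt0 _]] i j.
have n_gt0 : (0 < n)%N by apply: leq_trans n_ge2.
rewrite (resistance_reweighted A_sym A_ge0 A_conn Ap p_gt0 n_gt0).
exact: (lw_expr_cvg A_sym A_ge0 A_conn Ap p_gt0 n_gt0).
Qed.
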